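(* Let $q\neq-1$ be real and let $n,m\ge0$ be integers. Then $$\sum_{k=0}^{n}(-1)^kq^{\binom{k}{2}}\begin{bmatrix} n\\ k\end{bmatrix}\prod_{j=n+m+1-k}^{n+m}(1+q^j)\;U_{2n+m-1-k}(1,s,q)=q^{n^2-n+mn}s^n\,U_{m-1}(1,s,q).$$
   Context: $U_{-1}=0$, $U_0=1$, $U_n(x,s,q)=(1+q^{n})x\,U_{n-1}(x,s,q)+q^{n-1}s\,U_{n-2}(x,s,q)$ for $n\ge1$; $U_n(1,s,q)$ is its value at $x=1$. Notation: $[m]=1+q+\cdots+q^{m-1}$, $[m]!=[1]\cdots[m]$, $\begin{bmatrix} m\\ j\end{bmatrix}=\frac{[m]!}{[j]![m-j]!}$; empty products equal $1$. *)

From mathcomp Require Import all_boot all_order all_algebra.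
Set Implicit Arguments. Unset Strict Implicit. Unset Printing Implicit Defensive.
Import Order.TTheory GRing.Theory Num.Theory.
Local Open Scope ring_scope.

(* Shifted polynomials: Ush x s q k = U_{k-1}(x,s,q), so that the index -1 is
   representable with k : nat.
   U_{-1} = 0, U_0 = 1,
   U_n = (1+q^n) x U_{n-1} + q^{n-1} s U_{n-2}  (n >= 1). *)
Fixpoint Ush (R : pzRingType) (x s q : R) (k : nat) : R :=
  match k with
  | 0 => 0
  | 1 => 1
  | (k'.+1 as k1).+1 =>
      (1 + q ^+ k1) * x * Ush x s q k1 + q ^+ k' * s * Ush x s q k'
  end.

Definition qint (R : pzRingType) (q : R) (m : nat) : R := \sum_(i < m) q ^+ i.
Definition qfact (R : pzRingType) (q : R) (m : nat) : R :=
  \prod_(1 <= i < m.+1) qint q i.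
Definition qbinom (R : fieldType) (q : R) (m j : nat) : R :=
  qfact q m / (qfact q j * qfact q (m - j)).

From mathcomp Require Import all_boot all_order all_algebra.
From mathcomp Require Import ring zify.
Import Order.TTheory GRing.Theory Num.Theory.
Local Open Scope ring_scope.

(* Call F(n, m) the left-hand side.  Its coefficients (-1)^k q^C(k,2) [n,k]
   are those of (x;q)_n = (1 - x)(1 - q x)...(1 - q^(n-1) x), so they obey the
   two recurrences coming from (x;q)_(n+1) = (x;q)_n (1 - q^n x)
   = (1 - x) (q x;q)_n.  Splitting F(n+1, m) with the first one and using the
   recurrence of U once gives F(n+1, m) = (1 - q^n) F(n, m+1) + s G(n, m),
   where G(n, m) is F(n, m+1) with each U_j replaced by q^j U_(j-1); splitting G(n+1, m) with the
   second one expresses it through F(n, m+2) and F(n, m+1).  The hypothesis q <> -1 is exactly what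
   keeps every q-integer [i], i > 0, nonzero, as the q-Pascal rules need. *)

Lemma Ush1SS (R : pzRingType) (s q : R) k :
  Ush 1 s q k.+2 = (1 + q ^+ k.+1) * Ush 1 s q k.+1 + q ^+ k * s * Ush 1 s q k.
Proof. by rewrite /= mulr1. Qed.

Lemma sum_pascal (R : pzSemiRingType) (h x y z : nat -> R) n :
  (forall k, x k.+1 = y k.+1 + z k) -> x 0%N = y 0%N -> y n.+1 = 0 ->
  \sum_(0 <= k < n.+2) x k * h k =
  \sum_(0 <= k < n.+1) y k * h k + \sum_(0 <= k < n.+1) z k * h k.+1.
Proof.
move=> xS x0 yn.
rewrite big_nat_recl // x0.
under eq_big_nat => k _ do rewrite xS mulrDl.
rewrite big_split /= [in RHS]big_nat_recl // -!addrA; congr (_ + _).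
by rewrite big_nat_recr //= yn mul0r addr0.
Qed.

Section QInteger.
Variables (R : comPzRingType) (q : R).

Lemma qintS a : qint q a.+1 = qint q a + q ^+ a.
Proof. by rewrite /qint big_ord_recr. Qed.

Lemma qintD a b : qint q (a + b) = qint q a + q ^+ a * qint q b.
Proof.
elim: b => [|b IHb]; first by rewrite addn0 /qint big_ord0 mulr0 addr0.
by rewrite addnS !qintS IHb exprD; ring.
Qed.

Lemma qfact0 : qfact q 0 = 1.
Proof. by rewrite /qfact big_geq. Qed.

Lemma qfactS a : qfact q a.+1 = qfact q a * qint q a.+1.
Proof. by rewrite /qfact big_nat_recr. Qed.

End QInteger.

Lemma qint_neq0 (R : realFieldType) (q : R) i : q != -1 -> qint q i.+1 != 0.
Proof.
move=> qN1; have [q_ge0|q_lt0] := leP 0 q.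
  rewrite /qint big_ord_recl expr0 gt_eqF // ltr_pwDl // sumr_ge0 // => j _.
  exact: exprn_ge0.
apply/negP => /eqP qint0.
have : q ^+ i.+1 == 1 by rewrite expfS_eq1 -/(qint q i.+1) qint0 eqxx orbT.
move=> /eqP/(congr1 Num.norm); rewrite normrX normr1 => /eqP.
rewrite pexpr_eq1 // ltr0_norm // => /eqP qN.
by move: qN1; rewrite -qN opprK eqxx.
Qed.

Section QBinomial.
Variables (R : fieldType) (q : R).
Hypothesis qint_neq0 : forall i, qint q i.+1 != 0.

Lemma qfact_neq0 a : qfact q a != 0.
Proof.
elim: a => [|a IHa]; first by rewrite qfact0 oner_eq0.
by rewrite qfactS mulf_neq0.
Qed.

Lemma qbinom_n0 n : qbinom q n 0 = 1.
Proof. by rewrite /qbinom subn0 qfact0 mul1r divff // qfact_neq0. Qed.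

Lemma qbinom_nn n : qbinom q n n = 1.
Proof. by rewrite /qbinom subnn qfact0 mulr1 divff // qfact_neq0. Qed.

(* Truncated subtraction makes [qbinom q n k] nonzero for k > n. *)
Definition qbin n k := if (k <= n)%N then qbinom q n k else 0.

Lemma qbin_small n k : (n < k)%N -> qbin n k = 0.
Proof. by move=> ltnk; rewrite /qbin leqNgt ltnk. Qed.

Lemma qbinomE_pascal k b (n := (k + b).+1) :
  [/\ qbinom q n.+1 k.+1 = qfact q n.+1 / (qfact q k.+1 * qfact q b.+1),
      qbinom q n k.+1 = qfact q n / (qfact q k.+1 * qfact q b) &
      qbinom q n k = qfact q n / (qfact q k * qfact q b.+1)].
Proof.
rewrite /qbinom /n.
have -> : ((k + b).+2 - k.+1 = b.+1)%N by lia.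
have -> : ((k + b).+1 - k.+1 = b)%N by lia.
have -> : ((k + b).+1 - k = b.+1)%N by lia.
by split.
Qed.

Lemma qbinS n k : qbin n.+1 k.+1 = qbin n k.+1 + q ^+ (n - k) * qbin n k.
Proof.
rewrite /qbin ltnS; have [ltkn|ltnk|->] := ltngtP k n; last 2 first.
- by rewrite mulr0 addr0.
- by rewrite subnn !qbinom_nn add0r mul1r.
have [b ->] : exists b, n = (k + b).+1 by exists (n - k).-1; lia.
have [-> -> ->] := qbinomE_pascal k b; rewrite !qfactS.
have -> : ((k + b).+1 - k = b.+1)%N by lia.
have -> : qint q (k + b).+2 = qint q b.+1 + q ^+ b.+1 * qint q k.+1.
  by rewrite -qintD; congr qint; lia.
field.
by rewrite !qfact_neq0 !qint_neq0.
Qed.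

Lemma qbinS_dual n k : qbin n.+1 k.+1 = q ^+ k.+1 * qbin n k.+1 + qbin n k.
Proof.
rewrite /qbin ltnS; have [ltkn|ltnk|->] := ltngtP k n; last 2 first.
- by rewrite mulr0 addr0.
- by rewrite !qbinom_nn mulr0 add0r.
have [b ->] : exists b, n = (k + b).+1 by exists (n - k).-1; lia.
have [-> -> ->] := qbinomE_pascal k b; rewrite !qfactS.
have -> : qint q (k + b).+2 = qint q k.+1 + q ^+ k.+1 * qint q b.+1.
  by rewrite -qintD; congr qint; lia.
field.
by rewrite !qfact_neq0 !qint_neq0.
Qed.

Definition qpoch_coef n k := (-1) ^+ k * q ^+ 'C(k, 2) * qbin n k.

Lemma qpoch_coef0 n : qpoch_coef n 0 = 1.
Proof. by rewrite /qpoch_coef /qbin qbinom_n0 expr0 bin0n expr0 !mul1r. Qed.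

Lemma qpoch_coef_small n : qpoch_coef n n.+1 = 0.
Proof. by rewrite /qpoch_coef qbin_small ?mulr0. Qed.

Lemma qpoch_coefS n k :
  qpoch_coef n.+1 k.+1 = qpoch_coef n k.+1 - q ^+ n * qpoch_coef n k.
Proof.
rewrite /qpoch_coef qbinS binS bin1 !exprS exprD.
have [lekn|ltnk] := leqP k n; last first.
  by rewrite !qbin_small; [ring | lia..].
by rewrite -[in q ^+ n](subnKC lekn) exprD; ring.
Qed.

Lemma qpoch_coefS_dual n k :
  qpoch_coef n.+1 k.+1 = q ^+ k.+1 * qpoch_coef n k.+1 - q ^+ k * qpoch_coef n k.
Proof. by rewrite /qpoch_coef qbinS_dual binS bin1 !exprS exprD; ring. Qed.

End QBinomial.

Section Recurrences.
Variables (R : fieldType) (q s : R).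
Hypothesis qint_neq0 : forall i, qint q i.+1 != 0.

Local Notation u := (Ush 1 s q).
Local Notation a := (@qpoch_coef R q).

Definition upper_prod N k := \prod_(N + 1 - k <= j < N + 1) (1 + q ^+ j).

Lemma upper_prod0 N : upper_prod N 0 = 1.
Proof. by rewrite /upper_prod subn0 big_geq. Qed.

Lemma upper_prodS N k :
  (k <= N)%N -> upper_prod N k.+1 = upper_prod N k * (1 + q ^+ (N - k)).
Proof.
move=> lekN; rewrite /upper_prod (big_ltn (m := (N + 1 - k.+1)%N)); last by lia.
have -> : (N + 1 - k.+1).+1 = (N + 1 - k)%N by lia.
have -> : (N + 1 - k.+1 = N - k)%N by lia.
by rewrite mulrC.
Qed.

Lemma upper_prodSS N k :
  (k <= N)%N -> upper_prod N.+1 k.+1 = upper_prod N k * (1 + q ^+ N.+1).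
Proof.
move=> lekN; rewrite /upper_prod !addn1 big_nat_recr /=; last by lia.
by have -> : (N.+2 - k.+1 = N.+1 - k)%N by lia.
Qed.

Definition F n m :=
  \sum_(0 <= k < n.+1) a n k * upper_prod (n + m) k * u (2 * n + m - k).

Definition G n m :=
  \sum_(0 <= k < n.+1)
    a n k * upper_prod (n + m).+1 k * (q ^+ (2 * n + m - k) * u (2 * n + m - k)).

Lemma F0 m : F 0 m = u m.
Proof. by rewrite /F big_nat1 qpoch_coef0 // upper_prod0 muln0 subn0 !mul1r. Qed.

Lemma G0 m : G 0 m = q ^+ m * u m.
Proof. by rewrite /G big_nat1 qpoch_coef0 // upper_prod0 muln0 subn0 !mul1r. Qed.

Lemma F_rec n m : F n.+1 m = (1 - q ^+ n) * F n m.+1 + s * G n m.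
Proof.
pose h k := upper_prod (n.+1 + m) k * u (2 * n.+1 + m - k).
transitivity (\sum_(0 <= k < n.+2) a n.+1 k * h k).
  by apply: eq_big_nat => k _; rewrite /h !mulrA.
rewrite (@sum_pascal _ _ _ (a n) (fun k => - q ^+ n * a n k)); last 3 first.
- by move=> k; rewrite qpoch_coefS // mulNr.
- by rewrite !qpoch_coef0.
- by rewrite qpoch_coef_small.
rewrite /F /G !mulr_sumr -!big_split /=; apply: eq_big_nat => k /andP [_ ltkn].
rewrite /h upper_prodS; last by lia.
have -> : (2 * n.+1 + m - k = (2 * n + m - k).+2)%N by lia.
have -> : (2 * n.+1 + m - k.+1 = (2 * n + m - k).+1)%N by lia.
have -> : (2 * n + m.+1 - k = (2 * n + m - k).+1)%N by lia.
have -> : (n.+1 + m = n + m.+1)%N by lia.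
rewrite -addnS Ush1SS.
have -> : q ^+ (2 * n + m - k).+1 = q ^+ n * q ^+ (n + m.+1 - k).
  by rewrite -exprD; congr (_ ^+ _); lia.
ring.
Qed.

Lemma G_rec n m :
  G n.+1 m = q ^+ (2 * n + m + 2) * F n m.+2
             - q ^+ (2 * n + m + 1) * (1 + q ^+ (n + m + 2)) * F n m.+1.
Proof.
pose h k := upper_prod (n.+1 + m).+1 k
            * (q ^+ (2 * n.+1 + m - k) * u (2 * n.+1 + m - k)).
transitivity (\sum_(0 <= k < n.+2) a n.+1 k * h k).
  by apply: eq_big_nat => k _; rewrite /h !mulrA.
rewrite (@sum_pascal _ _ _ (fun k => q ^+ k * a n k) (fun k => - q ^+ k * a n k));
  last 3 first.
- by move=> k; rewrite qpoch_coefS_dual // mulNr.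
- by rewrite !qpoch_coef0 // expr0 mul1r.
- by rewrite qpoch_coef_small // mulr0.
rewrite /F !mulr_sumr -sumrN; congr (_ + _); apply: eq_big_nat => k /andP [_ ltkn].
- rewrite /h; have -> : ((n.+1 + m).+1 = n + m.+2)%N by lia.
  have -> : (2 * n.+1 + m - k = 2 * n + m.+2 - k)%N by lia.
  have -> : q ^+ (2 * n + m + 2) = q ^+ k * q ^+ (2 * n + m.+2 - k).
    by rewrite -exprD; congr (_ ^+ _); lia.
  ring.
- rewrite /h; have -> : ((n.+1 + m).+1 = (n + m.+1).+1)%N by lia.
  rewrite upper_prodSS; last by lia.
  have -> : (2 * n.+1 + m - k.+1 = 2 * n + m.+1 - k)%N by lia.
  have -> : q ^+ (2 * n + m + 1) = q ^+ k * q ^+ (2 * n + m.+1 - k).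
    by rewrite -exprD; congr (_ ^+ _); lia.
  have -> : (n + m + 2 = (n + m.+1).+1)%N by lia.
  ring.
Qed.

Lemma F_closed n m : F n m = q ^+ (n * n - n + m * n) * s ^+ n * u m.
Proof.
elim/ltn_ind: n m => -[|[|n]] IH m.
- by rewrite F0 !muln0 expr0 !mul1r.
- rewrite F_rec G0 expr0 subrr mul0r add0r.
  have -> : (1 * 1 - 1 + m * 1 = m)%N by lia.
  by rewrite expr1 mulrCA mulrA.
rewrite F_rec G_rec !IH // Ush1SS.
set e := (n * n - n + m.+1 * n)%N.
have -> : (n.+2 * n.+2 - n.+2 + m * n.+2 = e + (n + n + n + m + m + 2))%N by nia.
have -> : (n.+1 * n.+1 - n.+1 + m.+1 * n.+1 = e + (n + n + m + 1))%N by nia.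
have -> : (n * n - n + m.+2 * n = e + n)%N by nia.
rewrite mul2n -addnn !exprD !exprS expr0; ring.
Qed.

End Recurrences.

Theorem theorem3p4 (R : realFieldType) (q s : R) (n m : nat) (hq : q != -1) :
  \sum_(0 <= k < n.+1)
     (-1) ^+ k * q ^+ 'C(k, 2) * qbinom q n k
     * (\prod_(n + m + 1 - k <= j < n + m + 1) (1 + q ^+ j))
     * Ush 1 s q (2 * n + m - k)
  = q ^+ (n * n - n + m * n) * s ^+ n * Ush 1 s q m.
Proof.
rewrite -(@F_closed R q s (fun i => @qint_neq0 R q i hq)) /F.
apply: eq_big_nat => k /andP [_ ltkn].
by rewrite /qpoch_coef /qbin -ltnS ltkn.
Qed.
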